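(* Let $k\ge 3$, let $H$ be a connected $k$-uniform hypergraph on vertex set $V$, and let $y$ and $x$ be the principal eigenvectors of $H$ and of $\partial^*H$, respectively. Put $\hat y=(y_v^k)_{v\in V}$ and $\hat x=(x_v^2)_{v\in V}$. Then \[ D(\hat y,\hat x):=\max_{v\in V}\,|y_v^k-x_v^2|\le \tfrac12 . \] Moreover, if $\Delta_k:=\sup_{H} D(\hat y,\hat x)$, the supremum taken over all connected $k$-uniform hypergraphs $H$, then $\lim_{k\to\infty}\Delta_k=\tfrac12$.
   Context: For a connected $k$-uniform hypergraph $H=([n],E)$, writing $x^e=\prod_{v\in e}x_v$, its principal eigenvector is the unique strictly positive $y$ with $\|y\|_k=1$ and $\rho\, y_i^{k-1}=\sum_{e\ni i}y^{e\setminus\{i\}}$ for all $i$, where $\rho=\max_{\|z\|_k^k=1}k\sum_{e\in E}z^e$. The clique-shadow $\partial^*H$ is the multigraph on $[n]$ in which $\{u,v\}$ has multiplicity $\mu(uv)=|\{e\in E:u,v\in e\}|$; its principal eigenvector is the positive Perron eigenvector of its adjacency matrix (entries $\mu(uv)$), normalized to unit $2$-norm. *)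

From HB Require Import structures.
From mathcomp Require Import all_boot all_order all_algebra.
From mathcomp Require Import all_classical all_reals all_analysis.
Set Implicit Arguments. Unset Strict Implicit. Unset Printing Implicit Defensive.
Import Order.TTheory GRing.Theory Num.Theory.
Local Open Scope ring_scope.
Local Open Scope classical_set_scope.

(* A hypergraph on vertex set [n] = 'I_n is given by its edge set
   E : {set {set 'I_n}}. *)

Definition kuniform (k n : nat) (E : {set {set 'I_n}}) : Prop :=
  forall e, e \in E -> #|e| = k.

Definition hadj (n : nat) (E : {set {set 'I_n}}) : rel 'I_n :=
  fun u v => [exists e, (e \in E) && (u \in e) && (v \in e)].

Definition hconnected (n : nat) (E : {set {set 'I_n}}) : Prop :=
  forall u v : 'I_n, connect (hadj E) u v.

Definition is_max (R : realType) (S : set R) (r : R) : Prop :=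
  S r /\ forall s, S s -> s <= r.

Definition rho_set (R : realType) (k n : nat) (E : {set {set 'I_n}}) : set R :=
  [set r | exists z : 'I_n -> R,
       \sum_(i < n) `|z i| ^+ k = 1 /\
       r = k%:R * \sum_(e in E) \prod_(v in e) z v].

Definition hyp_principal (R : realType) (k n : nat) (E : {set {set 'I_n}})
    (y : 'I_n -> R) : Prop :=
  (forall i, 0 < y i) /\
  \sum_(i < n) y i ^+ k = 1 /\
  exists rho : R, is_max (@rho_set R k n E) rho /\
    forall i : 'I_n,
      rho * y i ^+ k.-1 = \sum_(e in E | i \in e) \prod_(v in e :\ i) y v.

(* multiplicity of the pair {u,v} in the clique-shadow (no loops) *)
Definition mu (R : realType) (n : nat) (E : {set {set 'I_n}}) (u v : 'I_n) : R :=
  if u == v then 0 else #|[set e in E | (u \in e) && (v \in e)]|%:R.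

Definition shadow_principal (R : realType) (n : nat) (E : {set {set 'I_n}})
    (x : 'I_n -> R) : Prop :=
  (forall i, 0 < x i) /\
  \sum_(i < n) x i ^+ 2 = 1 /\
  exists lam : R, forall u : 'I_n,
      \sum_(v < n) @mu R n E u v * x v = lam * x u.

Definition Ddist (R : realType) (k n : nat) (y x : 'I_n -> R) : R :=
  \big[Num.max/0]_(v < n) `|y v ^+ k - x v ^+ 2|.

Definition Delta (R : realType) (k : nat) : R :=
  sup [set d : R | exists (n : nat) (E : {set {set 'I_n}}) (y x : 'I_n -> R),
         [/\ kuniform k E, hconnected E, @hyp_principal R k n E y,
             @shadow_principal R n E x & d = @Ddist R k n y x]].

(* Summing the eigen-equations of H over all vertices gives rho = k sum_e y^e,
   while the equation at v alone gives rho y_v^k <= sum_e y^e; hence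
   y_v^k <= 1/k.  The adjacency matrix of the clique-shadow has zero diagonal,
   so the eigen-equation at v and Cauchy-Schwarz over the other vertices give
   x_v^2 <= 1/2.  Both weights thus lie in [0, 1/2].  Conversely, on the
   sunflower with m petals of size k - 1 the core has y^k = 1/k whatever m is,
   while its shadow weight is a / (2a + k - 2) where m (k - 1) = a (a + k - 2),
   which tends to 1/2 when a grows faster than k. *)

From HB Require Import structures.
From mathcomp Require Import all_boot all_order all_algebra.
From mathcomp Require Import all_classical all_reals all_analysis.
From mathcomp Require Import ring lra zify.
Import Order.TTheory GRing.Theory Num.Theory.
Import numFieldNormedType.Exports.
Local Open Scope ring_scope.
Set Implicit Arguments. Unset Strict Implicit.

Lemma sum_incident {V : nmodType} {T : finType} (E : {set {set T}})
    (G : {set T} -> T -> V) :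
  \sum_(e in E) \sum_(v in e) G e v = \sum_v \sum_(e in E | v \in e) G e v.
Proof.
under [RHS]eq_bigr do rewrite big_mkcondr.
by rewrite exchange_big; apply: eq_bigr => e _; rewrite big_mkcond.
Qed.

Lemma prod_le_mean_pow (R : numFieldType) (I : finType) (A : {pred I})
    (u : I -> R) (k : nat) :
  #|A| = k -> (0 < k)%N -> (forall i, 0 <= u i) ->
  \prod_(i in A) u i <= (\sum_(i in A) u i ^+ k) / k%:R.
Proof.
move=> cardA k_gt0 u_ge0.
have AGM := (leif_AGM (A := A) (fun i _ => exprn_ge0 k (u_ge0 i))).1.
rewrite /= cardA prodrXl in AGM.
by rewrite -(ler_pXn2r k_gt0) ?nnegrE ?prodr_ge0 ?divr_ge0 ?sumr_ge0 // => i _;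
  rewrite exprn_ge0.
Qed.

Lemma term_le_sumr {R : numDomainType} {I : finType} [F : I -> R] (j : I) :
  (forall i, 0 <= F i) -> F j <= \sum_i F i.
Proof. by move=> F_ge0; rewrite (bigD1 j) //= lerDl sumr_ge0. Qed.

Lemma exists_root_gt0 (R : realType) (c : R) (k : nat) :
  0 < c -> (0 < k)%N -> exists t : R, 0 < t /\ t ^+ k = c.
Proof.
move=> c_gt0 k_gt0; exists (c `^ k%:R^-1); split; first exact: powR_gt0.
rewrite -powR_mulrn ?powR_ge0 // -powRrM mulVf ?powRr1 ?ltW //.
by rewrite pnatr_eq0 -lt0n.
Qed.

Section HypergraphEigenpair.
Variables (R : realType) (k n : nat) (E : {set {set 'I_n}}).
Variables (y : 'I_n -> R) (rho : R).
Hypothesis k_gt0 : (0 < k)%N.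
Hypothesis E_uniform : kuniform k E.
Hypothesis y_gt0 : forall i, 0 < y i.
Hypothesis y_eigen : forall i,
  rho * y i ^+ k.-1 = \sum_(e in E | i \in e) \prod_(v in e :\ i) y v.

Lemma eigen_mul_weight i :
  rho * y i ^+ k = \sum_(e in E | i \in e) \prod_(v in e) y v.
Proof.
rewrite -(prednK k_gt0) exprS mulrCA y_eigen mulr_sumr.
by apply: eq_bigr => e /andP[_ ie]; rewrite (big_setD1 i ie).
Qed.

Lemma eigen_sum_weights :
  rho * \sum_i y i ^+ k = k%:R * \sum_(e in E) \prod_(v in e) y v.
Proof.
rewrite mulr_sumr mulr_sumr.
under eq_bigr do rewrite eigen_mul_weight.
rewrite -(sum_incident E (fun e _ => \prod_(v in e) y v)).
by apply: eq_bigr => e eE; rewrite sumr_const (E_uniform eE) mulr_natl.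
Qed.

Hypothesis y_unit : \sum_i y i ^+ k = 1.

Lemma eigen_edge_sum : rho = k%:R * \sum_(e in E) \prod_(v in e) y v.
Proof. by rewrite -eigen_sum_weights y_unit mulr1. Qed.

(* AM-GM on each edge, applied to the ratios |z_v| / y_v, turns the
   eigen-equations into a bound on every competitor of the maximum. *)
Lemma rho_set_le_eigenvalue s : rho_set k E s -> s <= rho.
Proof.
case=> z [z_unit ->]; pose u v := `|z v| / y v.
have u_ge0 v : 0 <= u v by rewrite divr_ge0 // ltW.
have z_eq v : `|z v| = y v * u v by rewrite mulrC divfK ?gt_eqF.
have edge_le e : e \in E ->
    k%:R * \prod_(v in e) z v <= \sum_(v in e) u v ^+ k * \prod_(w in e) y w.
  move=> eE; rewrite -mulr_suml -ler_pdivlMl ?ltr0n // mulrC.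
  apply: le_trans (ler_norm _) _; rewrite normr_prod.
  under eq_bigr do rewrite z_eq.
  rewrite big_split /= mulrAC [leRHS]mulrC; apply: ler_wpM2l.
    by rewrite prodr_ge0 // => v _; rewrite ltW.
  exact: prod_le_mean_pow (E_uniform eE) k_gt0 u_ge0.
rewrite mulr_sumr; apply: le_trans (ler_sum _ edge_le) _.
rewrite sum_incident -[leRHS]mulr1 -[X in _ * X]z_unit mulr_sumr.
rewrite le_eqVlt (eq_bigr (fun v => rho * `|z v| ^+ k)) ?eqxx // => v _.
by rewrite -mulr_sumr -eigen_mul_weight /u expr_div_n mulrCA divfK ?expf_neq0 ?gt_eqF.
Qed.

Lemma hyp_principal_of_eigenpair : hyp_principal k E y.
Proof.
do 2!split=> //; exists rho; split=> //; split; last exact: rho_set_le_eigenvalue.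
exists y; split; last exact: eigen_edge_sum.
by rewrite -y_unit; apply: eq_bigr => i _; rewrite ger0_norm // ltW.
Qed.

Lemma hyp_weight_le_invk w e0 : e0 \in E -> y w ^+ k <= k%:R^-1.
Proof.
move=> e0E; have rhoE := eigen_edge_sum; set S := \sum_(e in E) _ in rhoE.
have S_gt0 : 0 < S.
  rewrite /S (bigD1 e0) //= ltr_pwDl ?prodr_gt0 // sumr_ge0 // => e _.
  by rewrite prodr_ge0 // => v _; rewrite ltW.
have : rho * y w ^+ k <= S.
  rewrite eigen_mul_weight /S big_mkcondr /= ler_sum // => e _.
  by case: ifP => // _; rewrite prodr_ge0 // => v _; rewrite ltW.
by rewrite rhoE mulrAC ger_pMl // -ler_pdivlMl ?ltr0n // mulr1.
Qed.

End HypergraphEigenpair.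

Section ZeroDiagonalPerron.
Variables (R : realFieldType) (n : nat) (A : 'I_n -> 'I_n -> R).
Variables (x : 'I_n -> R) (lam : R).
Hypothesis A_ge0 : forall u v, 0 <= A u v.
Hypothesis A_sym : forall u v, A u v = A v u.
Hypothesis x_gt0 : forall i, 0 < x i.
Hypothesis x_eigen : forall u, \sum_v A u v * x v = lam * x u.

Let Ax_ge0 u v : 0 <= A u v * x v.
Proof. by rewrite mulr_ge0 // ltW. Qed.

Lemma perron_eigenvalue_gt0 w u0 : 0 < A w u0 -> 0 < lam.
Proof.
move=> Awu0_gt0; have := term_le_sumr u0 (Ax_ge0 w); rewrite x_eigen.
move/(lt_le_trans (mulr_gt0 Awu0_gt0 (x_gt0 u0))).
by rewrite pmulr_lgt0.
Qed.

(* Pairing each term of the row with the eigen-equation of its column. *)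
Lemma row_sqnorm_le_eigenvalue_sq w : \sum_u A w u ^+ 2 <= lam ^+ 2.
Proof.
rewrite -(ler_pM2r (x_gt0 w)) mulr_suml [lam ^+ 2]expr2 -mulrA -x_eigen.
rewrite mulr_sumr; apply: ler_sum => u _.
rewrite expr2 -mulrA [leRHS]mulrCA -x_eigen.
by rewrite ler_wpM2l // A_sym (term_le_sumr w (Ax_ge0 u)).
Qed.

Hypothesis A_diag0 : forall u, A u u = 0.
Hypothesis x_unit : \sum_i x i ^+ 2 = 1.

(* Cauchy-Schwarz over the vertices other than w, in the form
   2ab <= a^2 + b^2 with a = x_w A_wu and b = lam x_u. *)
Lemma perron_coord_sq_le_half w u0 : 0 < A w u0 -> x w ^+ 2 <= 1 / 2.
Proof.
move=> Awu0_gt0; have lam_gt0 := perron_eigenvalue_gt0 Awu0_gt0.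
have AMGM : \sum_(u | u != w) 2 * (x w * lam) * (A w u * x u) <=
    \sum_(u | u != w) (x w ^+ 2 * A w u ^+ 2 + lam ^+ 2 * x u ^+ 2).
  apply: ler_sum => u _; rewrite -subr_ge0.
  have -> : x w ^+ 2 * A w u ^+ 2 + lam ^+ 2 * x u ^+ 2 -
      2 * (x w * lam) * (A w u * x u) = (x w * A w u - lam * x u) ^+ 2 by ring.
  exact: sqr_ge0.
have row_w : \sum_(u | u != w) A w u * x u = lam * x w.
  by rewrite -x_eigen [RHS](bigD1 w) //= A_diag0 mul0r add0r.
have row_sq : \sum_(u | u != w) A w u ^+ 2 = \sum_u A w u ^+ 2.
  by rewrite [RHS](bigD1 w) //= A_diag0 expr0n add0r.
have others : \sum_(u | u != w) x u ^+ 2 = 1 - x w ^+ 2.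
  by rewrite -x_unit [in RHS](bigD1 w) //= addrAC subrr add0r.
rewrite -mulr_sumr row_w big_split /= -!mulr_sumr row_sq others in AMGM.
have := ler_wpM2l (sqr_ge0 (x w)) (row_sqnorm_le_eigenvalue_sq w).
have : 0 < lam ^+ 2 by rewrite exprn_gt0.
move: AMGM; set a := x w ^+ 2; set L := lam ^+ 2; set Q := \sum_u _.
have -> : 2 * (x w * lam) * (lam * x w) = 2 * (a * L) by rewrite /a /L; ring.
move=> *; nra.
Qed.

End ZeroDiagonalPerron.

Section Shadow.
Variables (R : realType) (n : nat) (E : {set {set 'I_n}}).

Lemma mu_ge0 u v : 0 <= mu R E u v.
Proof. by rewrite /mu; case: eqP. Qed.

Lemma mu_sym u v : mu R E u v = mu R E v u.
Proof.
rewrite /mu eq_sym; case: ifP => // _; congr _%:R; apply: eq_card => e.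
by rewrite !inE [(u \in e) && _]andbC.
Qed.

Lemma mu_diag u : mu R E u u = 0.
Proof. by rewrite /mu eqxx. Qed.

Lemma mu_gt0 e u v : e \in E -> u \in e -> v \in e -> u != v -> 0 < mu R E u v.
Proof.
move=> eE ue ve uv; rewrite /mu (negbTE uv) ltr0n card_gt0.
by apply/set0Pn; exists e; rewrite !inE eE ue ve.
Qed.

End Shadow.

Lemma hconnected_isolated n (E : {set {set 'I_n}}) w :
  hconnected E -> (forall e, e \in E -> w \notin e) -> forall u, u = w.
Proof.
move=> E_conn w_isolated u; have /connectP [[|v p] /= w_path ->] := E_conn w u => //.
case/andP: w_path => /existsP [e /andP[/andP[eE we] _]] _.
by move: (w_isolated e eE); rewrite we.
Qed.

Lemma Ddist_le_half (R : realType) k n (E : {set {set 'I_n}}) (y x : 'I_n -> R) :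
  (2 <= k)%N -> kuniform k E -> hconnected E ->
  hyp_principal k E y -> shadow_principal E x -> Ddist k y x <= 1 / 2.
Proof.
move=> k_ge2 E_unif E_conn [y_gt0 [y_unit [rho [_ y_eigen]]]].
move=> [x_gt0 [x_unit [lam x_eigen]]].
apply: bigmax_le => [|w _]; first lra.
case: (pickP (fun e => (e \in E) && (w \in e))) => [e0 /andP[e0E we0]|w_isolated].
- have [u0] : exists u0, u0 \in e0 :\ w.
    apply/set0Pn; rewrite -card_gt0; move: (cardsD1 w e0).
    by rewrite we0 (E_unif e0 e0E) add1n => k_eq; move: k_ge2; rewrite k_eq ltnS.
  rewrite in_setD1 => /andP[u0w u0e0].
  have y_le : y w ^+ k <= 1 / 2.
    have k_gt0 : (0 < k)%N by apply: leq_trans k_ge2.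
    apply: le_trans (hyp_weight_le_invk k_gt0 E_unif y_gt0 y_eigen y_unit w e0E) _.
    by rewrite div1r lef_pV2 ?posrE ?ltr0n // ler_nat.
  have x_le : x w ^+ 2 <= 1 / 2.
    apply: (perron_coord_sq_le_half (@mu_ge0 _ _ E) (@mu_sym _ _ E) x_gt0 x_eigen
      (@mu_diag _ _ E) x_unit (u0 := u0)).
    by rewrite mu_sym (mu_gt0 _ e0E).
  have := exprn_ge0 k (ltW (y_gt0 w)); have := sqr_ge0 (x w).
  by rewrite ler_norml; move=> *; apply/andP; split; lra.
- have all_w : forall u, u = w.
    apply: hconnected_isolated E_conn _ => e eE.
    by have := w_isolated e; rewrite eE /= => ->.
  have sum_at_w (F : 'I_n -> R) : \sum_u F u = F w.
    by rewrite (big_pred1 w) // => u; rewrite /= [u]all_w eqxx.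
  rewrite !sum_at_w in y_unit x_unit.
  by rewrite y_unit x_unit subrr normr0; lra.
Qed.

(* The sunflower with m petals of size q + 2: vertex 0 is the core and a vertex
   v > 0 lies in petal (v - 1) / (q + 2), so it is (q + 3)-uniform. *)
Definition petal (q v : nat) : nat := v.-1 %/ q.+2.

Definition sunflower_edge (q m : nat) (p : 'I_m) : {set 'I_(m * q.+2).+1} :=
  [set v | (v == ord0) || (petal q v == p)].

Definition sunflower (q m : nat) : {set {set 'I_(m * q.+2).+1}} :=
  [set sunflower_edge q p | p : 'I_m].

Definition core_petal (R : Type) (N : nat) (c p : R) (v : 'I_N.+1) : R :=
  if v == ord0 then c else p.

Section SunflowerCombinatorics.
Variables q m : nat.
Local Notation V := 'I_(m * q.+2).+1.

Lemma neq_ord0 (v : V) : (v != ord0) = (v != 0%N :> nat).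
Proof. by rewrite -val_eqE. Qed.

Lemma petal_lt (v : V) : v != ord0 -> (petal q v < m)%N.
Proof. by rewrite neq_ord0 => v_neq0; rewrite /petal ltn_divLR // -ltnS prednK ?lt0n. Qed.

Lemma core_in_edge (p : 'I_m) : ord0 \in sunflower_edge q p.
Proof. by rewrite inE eqxx. Qed.

Lemma in_edge (v : V) (p : 'I_m) :
  v != ord0 -> (v \in sunflower_edge q p) = (petal q v == p).
Proof. by move=> v_neq0; rewrite inE (negbTE v_neq0). Qed.

Definition petal_vertex (p : 'I_m) (j : 'I_q.+2) : V := inord (1 + p * q.+2 + j).

Lemma petal_vertexK p j : nat_of_ord (petal_vertex p j) = (1 + p * q.+2 + j)%N.
Proof. by rewrite /petal_vertex inordK //; have := ltn_ord p; have := ltn_ord j; nia. Qed.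

Lemma petal_vertex_neq0 p j : petal_vertex p j != ord0.
Proof. by rewrite neq_ord0 petal_vertexK. Qed.

Lemma petal_of_vertex p j : petal q (petal_vertex p j) = p.
Proof.
by rewrite /petal petal_vertexK add1n /= divnMDl // divn_small // addn0.
Qed.

Lemma sunflower_edge_inj : injective (@sunflower_edge q m).
Proof.
move=> p1 p2 edge_eq; set z := petal_vertex p1 ord0.
have : z \in sunflower_edge q p1 by rewrite in_edge ?petal_vertex_neq0 ?petal_of_vertex.
by rewrite edge_eq in_edge ?petal_vertex_neq0 // petal_of_vertex => /eqP/val_inj ->.
Qed.

Lemma edge_minus_core (p : 'I_m) :
  sunflower_edge q p :\ ord0 = petal_vertex p @: 'I_q.+2.
Proof.
apply/finset.setP => v; rewrite in_setD1; apply/andP/imsetP => [[v_neq0]|[j _ ->]].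
  rewrite in_edge // => /eqP petal_v; exists (Ordinal (ltn_pmod v.-1 (ltn0Sn q.+1))) => //.
  apply: val_inj; rewrite /= petal_vertexK /= -petal_v /petal.
  move: v_neq0 (divn_eq v.-1 q.+2)%N; rewrite neq_ord0.
  set a := (v.-1 %/ q.+2)%N; set b := (v.-1 %% q.+2)%N; lia.
by rewrite petal_vertex_neq0 in_edge ?petal_vertex_neq0 // petal_of_vertex.
Qed.

Lemma petal_vertex_inj p : injective (petal_vertex p).
Proof.
by move=> j1 j2 /(congr1 (@nat_of_ord _)); rewrite !petal_vertexK => /addnI /val_inj.
Qed.

Lemma card_edge_minus_core (p : 'I_m) : #|sunflower_edge q p :\ ord0| = q.+2.
Proof. by rewrite edge_minus_core card_imset ?card_ord //; exact: petal_vertex_inj. Qed.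

Lemma card_petal_mates (v : V) (v_neq0 : v != ord0) :
  #|sunflower_edge q (Ordinal (petal_lt v_neq0)) :\ v :\ ord0| = q.+1.
Proof.
set e := sunflower_edge q _; have v_in : v \in e by rewrite in_edge.
rewrite finset.setDDl finset.setUC -finset.setDDl; have := cardsD1 v (e :\ ord0).
by rewrite card_edge_minus_core in_setD1 v_neq0 v_in; case.
Qed.

Lemma sunflower_uniform : kuniform q.+3 (sunflower q m).
Proof.
move=> _ /imsetP [p _ ->].
by rewrite (cardsD1 ord0) core_in_edge card_edge_minus_core.
Qed.

Lemma sunflower_connected : hconnected (sunflower q m).
Proof.
have core_link (v : V) :
    connect (hadj (sunflower q m)) ord0 v /\ connect (hadj (sunflower q m)) v ord0.
  case: (eqVneq v ord0) => [->|v_neq0]; first by split; exact: connect0.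
  pose e := sunflower_edge q (Ordinal (petal_lt v_neq0)).
  have eE : e \in sunflower q m by apply: imset_f.
  have ve : v \in e by rewrite in_edge.
  by split; apply/connect1/existsP; exists e; rewrite eE ve core_in_edge.
by move=> u v; apply: connect_trans (core_link u).2 (core_link v).1.
Qed.

End SunflowerCombinatorics.

Section SunflowerEigenvectors.
Variables (R : realType) (q m : nat).
Local Notation V := 'I_(m * q.+2).+1.
Local Notation H := (sunflower q m).
Implicit Types (c p : R) (v : V).

Lemma core_petal_core c p : core_petal c p (ord0 : V) = c.
Proof. by rewrite /core_petal eqxx. Qed.

Lemma core_petal_petal c p v : v != ord0 -> core_petal c p v = p.
Proof. by rewrite /core_petal => /negbTE ->. Qed.

Lemma sum_core_petal_pow c p k :
  \sum_(v : V) core_petal c p v ^+ k = c ^+ k + p ^+ k *+ (m * q.+2).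
Proof.
rewrite big_ord_recl core_petal_core; congr (_ + _).
by rewrite (eq_bigr (fun _ => p ^+ k)) ?sumr_const ?card_ord // => v _;
  rewrite core_petal_petal // eq_sym neq_lift.
Qed.

Lemma sum_sunflower_edges_at (F : {set V} -> R) v :
  \sum_(e in H | v \in e) F e =
  \sum_(r < m) (if v \in sunflower_edge q r then F (sunflower_edge q r) else 0).
Proof.
rewrite big_mkcondr big_imset /=; last by move=> r1 r2 _ _; exact: sunflower_edge_inj.
by apply: eq_bigl => r; rewrite inE.
Qed.

Lemma eigen_sum_at_core c p :
  \sum_(e in H | ord0 \in e) \prod_(v in e :\ ord0) core_petal c p v = p ^+ q.+2 *+ m.
Proof.
rewrite sum_sunflower_edges_at (eq_bigr (fun _ => p ^+ q.+2)) ?sumr_const ?card_ord //.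
move=> r _; rewrite core_in_edge (eq_bigr (fun _ => p)).
  by rewrite prodr_const card_edge_minus_core.
by move=> v; rewrite in_setD1 => /andP [v_neq0 _]; rewrite core_petal_petal.
Qed.

Lemma eigen_sum_at_petal c p v : v != ord0 ->
  \sum_(e in H | v \in e) \prod_(u in e :\ v) core_petal c p u = c * p ^+ q.+1.
Proof.
move=> v_neq0; set r0 := Ordinal (petal_lt v_neq0).
rewrite sum_sunflower_edges_at (bigD1 r0) //= [X in _ + X]big1 ?addr0; last first.
  move=> r r_neq; rewrite in_edge //; case: eqP => // petal_v.
  by move: r_neq; rewrite -val_eqE /= petal_v eqxx.
have v_in : v \in sunflower_edge q r0 by rewrite in_edge.
rewrite v_in (big_setD1 ord0) /=; last by rewrite in_setD1 core_in_edge eq_sym v_neq0.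
rewrite core_petal_core (eq_bigr (fun _ => p)); last first.
  by move=> u; rewrite !in_setD1 => /andP [u_neq0 _]; rewrite core_petal_petal.
by rewrite prodr_const card_petal_mates.
Qed.

Lemma mu_sunflower u v : u != v ->
  mu R H u v =
  #|[set r : 'I_m | (u \in sunflower_edge q r) && (v \in sunflower_edge q r)]|%:R.
Proof.
move=> uv; rewrite /mu (negbTE uv) -(card_imset _ (@sunflower_edge_inj q m)).
congr _%:R; apply: eq_card => e; rewrite inE; apply/andP/imsetP.
  by case=> /imsetP [r _ ->] uv_in; exists r; rewrite // inE.
by case=> r; rewrite inE => uv_in ->; split; first exact: imset_f.
Qed.

Lemma mu_sunflower_core v : v != ord0 -> mu R H ord0 v = 1.
Proof.
move=> v_neq0; rewrite mu_sunflower 1?eq_sym //.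
suff -> : [set r | (ord0 \in sunflower_edge q r) && (v \in sunflower_edge q r)] =
    [set Ordinal (petal_lt v_neq0)] by rewrite cards1.
by apply/finset.setP => r; rewrite inE finset.in_set1 core_in_edge in_edge.
Qed.

Lemma mu_sunflower_petals u v : u != ord0 -> v != ord0 -> u != v ->
  mu R H u v = (petal q u == petal q v)%:R.
Proof.
move=> u_neq0 v_neq0 uv; rewrite mu_sunflower //; case: eqP => [petal_eq|petal_neq].
  suff -> : [set r | (u \in sunflower_edge q r) && (v \in sunflower_edge q r)] =
      [set Ordinal (petal_lt u_neq0)] by rewrite cards1.
  apply/finset.setP => r; rewrite inE finset.in_set1 !in_edge // -petal_eq andbb.
  by rewrite -val_eqE eq_sym.
suff -> : [set r | (u \in sunflower_edge q r) && (v \in sunflower_edge q r)] = finset.set0.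
  by rewrite cards0.
apply/finset.setP => r; rewrite inE finset.in_set0 !in_edge //.
by apply/negP => /andP [/eqP pu /eqP pv]; apply: petal_neq; rewrite pu pv.
Qed.

Lemma shadow_sum_at_core c p :
  \sum_v mu R H ord0 v * core_petal c p v = p *+ (m * q.+2).
Proof.
rewrite big_ord_recl mu_diag mul0r add0r.
rewrite (eq_bigr (fun _ => p)) ?sumr_const ?card_ord // => i _.
have i_neq0 : lift ord0 i != ord0 :> V by rewrite eq_sym neq_lift.
by rewrite mu_sunflower_core // mul1r core_petal_petal.
Qed.

Lemma shadow_sum_at_petal c p u : u != ord0 ->
  \sum_v mu R H u v * core_petal c p v = c + p *+ q.+1.
Proof.
move=> u_neq0; set S := sunflower_edge q (Ordinal (petal_lt u_neq0)) :\ u :\ ord0.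
rewrite (eq_bigr (fun v => (if v == ord0 then c else 0) + (if v \in S then p else 0))).
  by rewrite big_split /= -!big_mkcond /= big_pred1_eq sumr_const card_petal_mates.
move=> v _; case: (eqVneq v ord0) => [->|v_neq0].
  by rewrite mu_sym mu_sunflower_core // mul1r core_petal_core /S !in_setD1 eqxx addr0.
rewrite add0r core_petal_petal //; case: (eqVneq v u) => [->|vu].
  by rewrite mu_diag mul0r /S !in_setD1 eqxx /= andbF.
rewrite mu_sunflower_petals // 1?eq_sym // /S !in_setD1 vu v_neq0 in_edge //= eq_sym.
by case: (_ == _); rewrite ?mul1r ?mul0r.
Qed.

End SunflowerEigenvectors.

Section SunflowerPrincipal.
Variables (R : realType) (q m : nat).

Lemma sunflower_hyp_principal (c p : R) :
  0 < c -> 0 < p -> c ^+ q.+3 = q.+3%:R^-1 -> p ^+ q.+3 * m%:R = q.+3%:R^-1 ->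
  hyp_principal q.+3 (sunflower q m) (core_petal c p).
Proof.
move=> c_gt0 p_gt0 c_pow p_pow; have k_neq0 : q.+3%:R != 0 :> R by rewrite pnatr_eq0.
apply: (@hyp_principal_of_eigenpair _ _ _ _ _ (c / p)) => //.
- exact: sunflower_uniform.
- by move=> v; rewrite /core_petal; case: ifP.
- move=> v; case: (eqVneq v ord0) => [->|v_neq0].
    rewrite eigen_sum_at_core core_petal_core /= -mulr_natr.
    by rewrite mulrAC -exprS c_pow -p_pow exprS; field; rewrite gt_eqF.
  by rewrite eigen_sum_at_petal // core_petal_petal //= exprS mulrA divfK ?gt_eqF.
- rewrite sum_core_petal_pow c_pow -[p ^+ _ *+ _]mulr_natr natrM mulrA p_pow.
  by rewrite -[X in X + _]mulr1 -mulrDr nat1r mulVf.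
Qed.

Lemma sunflower_shadow_principal (a : nat) (T : R) :
  (m * q.+2 = a * (a + q.+1))%N -> (0 < a)%N -> 0 < T ->
  T ^+ 2 = a%:R ^+ 2 + (m * q.+2)%:R ->
  shadow_principal (sunflower q m) (core_petal (a%:R / T) T^-1).
Proof.
move=> sizeE a_gt0 T_gt0 T_sq.
have a_neq0 : a%:R != 0 :> R by rewrite pnatr_eq0 -lt0n.
have N_eq : (m * q.+2)%:R = a%:R * (a%:R + q.+1%:R) :> R by rewrite sizeE natrM natrD.
split.
  by move=> v; rewrite /core_petal; case: ifP; rewrite ?divr_gt0 ?invr_gt0 ?ltr0n.
split.
  rewrite sum_core_petal_pow expr_div_n exprVn -[_^-1 *+ _]mulr_natr mulrC -mulrDr -T_sq.
  by rewrite mulVf // expf_neq0 // gt_eqF.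
exists (a%:R + q.+1%:R) => u; case: (eqVneq u ord0) => [->|u_neq0].
  rewrite shadow_sum_at_core core_petal_core -[_^-1 *+ _]mulr_natr N_eq.
  by field; rewrite gt_eqF.
rewrite shadow_sum_at_petal // core_petal_petal //.
by field; rewrite gt_eqF.
Qed.

End SunflowerPrincipal.

Lemma le_Ddist (R : realType) k n (y x : 'I_n -> R) v :
  `|y v ^+ k - x v ^+ 2| <= Ddist k y x.
Proof. exact: (le_bigmax _ (fun v => `|y v ^+ k - x v ^+ 2|)). Qed.

Lemma sunflower_core_gap (R : realType) q :
  let a : R := (q.+2 * q.+3)%:R in
  1 / 2 - 2 / q.+3%:R <= a / (2 * a + q.+1%:R) - q.+3%:R^-1.
Proof.
rewrite /= natrM -[q.+3]addn3 -[q.+2]addn2 -[q.+1]addn1 !natrD.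
have q_ge0 : 0 <= q%:R :> R by rewrite ler0n.
set Q := q%:R; set a := (Q + 2%:R) * (Q + 3%:R).
have D1 : 0 < 2 * a + (Q + 1) by rewrite /a; nra.
have D2 : 0 < Q + 3%:R by lra.
rewrite -subr_ge0.
have -> : a / (2 * a + (Q + 1)) - (Q + 3%:R)^-1 - (1 / 2 - 2 / (Q + 3%:R)) =
    (2 * (2 * a + (Q + 1)) - (Q + 1) * (Q + 3%:R)) / (2 * (2 * a + (Q + 1)) * (Q + 3%:R)).
  by field; rewrite !gt_eqF.
by rewrite divr_ge0 ?mulr_ge0 ?ltW // /a; nra.
Qed.

Lemma sunflower_gap (R : realType) q :
  exists n (E : {set {set 'I_n}}) (y x : 'I_n -> R),
  [/\ kuniform q.+3 E, hconnected E, hyp_principal q.+3 E y, shadow_principal E x &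
      1 / 2 - 2 / q.+3%:R <= Ddist q.+3 y x].
Proof.
(* a = (k - 1) k makes both the gap and the petal count m work out. *)
pose a := (q.+2 * q.+3)%N; pose m := (q.+3 * (a + q.+1))%N.
have sizeE : (m * q.+2 = a * (a + q.+1))%N by rewrite /m /a; ring.
have [c [c_gt0 c_pow]] : exists c : R, 0 < c /\ c ^+ q.+3 = q.+3%:R^-1.
  by apply: exists_root_gt0; rewrite ?invr_gt0 ?ltr0n.
have [p [p_gt0 p_pow]] : exists p : R, 0 < p /\ p ^+ q.+3 = q.+3%:R^-1 / m%:R.
  by apply: exists_root_gt0; rewrite ?divr_gt0 ?invr_gt0 ?ltr0n.
pose T : R := Num.sqrt (a%:R ^+ 2 + (m * q.+2)%:R).
have T_sq : T ^+ 2 = a%:R ^+ 2 + (m * q.+2)%:R by rewrite sqr_sqrtr // addr_ge0 ?sqr_ge0.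
have T_gt0 : 0 < T by rewrite sqrtr_gt0 addr_gt0 ?exprn_gt0 ?ltr0n // muln_gt0.
exists (m * q.+2).+1, (sunflower q m), (core_petal c p), (core_petal (a%:R / T) T^-1).
split; [exact: sunflower_uniform | exact: sunflower_connected | | | ].
- apply: sunflower_hyp_principal => //; rewrite p_pow divfK // pnatr_eq0.
  by rewrite /m muln_eq0.
- exact: sunflower_shadow_principal.
apply: le_trans (sunflower_core_gap R q) (le_trans _ (le_Ddist _ _ _ ord0)).
rewrite !core_petal_core c_pow distrC (le_trans _ (ler_norm _)) // lerD2r.
suff -> : (a%:R / T) ^+ 2 = a%:R / (2 * a%:R + q.+1%:R) :> R by [].
have a_gt0 : 0 < a%:R :> R by rewrite ltr0n.
have q_ge0 : 0 <= q%:R :> R by rewrite ler0n.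
rewrite expr_div_n T_sq sizeE natrM natrD; field.
by apply/andP; split; rewrite gt_eqF //; nra.
Qed.

Local Open Scope classical_set_scope.

Section DeltaBounds.
Variable R : realType.

Lemma Delta_ge_Ddist k n (E : {set {set 'I_n}}) (y x : 'I_n -> R) :
  (2 <= k)%N -> kuniform k E -> hconnected E ->
  hyp_principal k E y -> shadow_principal E x -> Ddist k y x <= Delta R k.
Proof.
move=> k_ge2 E_unif E_conn y_pr x_pr; apply: ub_le_sup.
  exists (1 / 2) => _ [n' [E' [y' [x' [E'_unif E'_conn y'_pr x'_pr ->]]]]].
  exact: Ddist_le_half k_ge2 E'_unif E'_conn y'_pr x'_pr.
by exists n, E, y, x.
Qed.

Lemma Delta_le_half q : Delta R q.+3 <= 1 / 2.
Proof.
apply: ge_sup.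
  have [n [E [y [x [E_unif E_conn y_pr x_pr _]]]]] := sunflower_gap R q.
  by exists (Ddist q.+3 y x), n, E, y, x.
move=> _ [n [E [y [x [E_unif E_conn y_pr x_pr ->]]]]].
exact: (Ddist_le_half (k := q.+3) isT E_unif) E_conn y_pr x_pr.
Qed.

Lemma Delta_ge q : 1 / 2 - 2 / q.+3%:R <= Delta R q.+3.
Proof.
have [n [E [y [x [E_unif E_conn y_pr x_pr gap]]]]] := sunflower_gap R q.
exact: le_trans gap (Delta_ge_Ddist (k := q.+3) isT E_unif E_conn y_pr x_pr).
Qed.

End DeltaBounds.

Theorem theorem6p1 (R : realType) :
  (forall (k n : nat) (E : {set {set 'I_n}}) (y x : 'I_n -> R),
      (3 <= k)%N -> kuniform k E -> hconnected E ->
      hyp_principal k E y -> shadow_principal E x ->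
      Ddist k y x <= 1 / 2) /\
  (Delta R k @[k --> \oo] --> (2^-1 : R)).
Proof.
split=> [k n E y x k_ge3|]; first exact: Ddist_le_half (ltnW k_ge3).
have inv_k_cvg0 : k%:R^-1 @[k --> \oo] --> (0 : R).
  apply/gtr0_cvgV0; last exact: cvgr_idn.
  by near=> k; rewrite ltr0n; near: k; exact: nbhs_infty_gt.
rewrite -div1r.
apply: (squeeze_cvgr (f := fun k => 1 / 2 - 2 * k%:R^-1) (h := fun=> 1 / 2)).
- near=> k; have k_ge3 : (3 <= k)%N by near: k; exact: nbhs_infty_ge.
  by rewrite -(subnK k_ge3) addn3 Delta_ge Delta_le_half.
- rewrite -[X in _ --> X]subr0 -[X in _ - X](mulr0 2).
  apply: cvgB; first exact: cvg_cst.
  by apply: cvgM; [exact: cvg_cst | exact: inv_k_cvg0].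
- exact: cvg_cst.
Unshelve. all: end_near.
Qed.
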